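(* Let $\beta>0$ and $\beta'>0$. For integers $k,l\geqslant 0$ define $$T_{l,k}=\int_{\mathbb{R}}H_{l}^{\beta'}(v)\,\mathcal{H}_{k}^{\beta}(v)\,\mathrm{d}v,$$ and set $T_{l,k}=0$ whenever $l<0$ or $k<0$. Then: (i) $T_{l,k}=0$ whenever $l<k$ or $l+k$ is odd; (ii) for all $k,l\geqslant 0$, $T_{l,k}=\frac{\beta}{\beta'}\sqrt{\frac{k+1}{l+1}}\,T_{l+1,k+1}$ and $T_{l,l}=\left(\frac{\beta'}{\beta}\right)^{l+\frac12}$; (iii) for all $l\geqslant 1$, $k\geqslant 0$, $$T_{l,k}=\frac{\beta'}{\beta}\sqrt{\frac{k+1}{l}}\,T_{l-1,k+1}+\frac{\beta'}{\beta}\sqrt{\frac{k}{l}}\,T_{l-1,k-1}-\sqrt{\frac{l-1}{l}}\,T_{l-2,k};$$ (iv) for all $l\geqslant 1$, $k\geqslant 0$ with $l\neq k$, $$T_{l,k}=\frac{\sqrt{l(k+1)}}{l-k}\left(\frac{\beta'}{\beta}-\frac{\beta}{\beta'}\right)T_{l-1,k+1}.$$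
   Context: $H_k$ denotes the (physicists') Hermite polynomial of degree $k\geqslant 0$, given by Rodrigues' formula $H_k(v)=(-1)^k e^{v^2}\frac{\mathrm{d}^k}{\mathrm{d}v^k}\big[e^{-v^2}\big]$. For a scaling factor $\beta>0$ and $k\geqslant 0$, the scaled Hermite polynomial and the scaled asymmetrically-weighted Hermite function are $$H_k^{\beta}(v)=\frac{\sqrt{\beta}}{(2\pi)^{1/4}\sqrt{2^k k!}}\,H_k\!\left(\frac{\beta v}{\sqrt2}\right),\qquad \mathcal{H}_k^{\beta}(v)=\frac{\sqrt{\beta}}{(2\pi)^{1/4}\sqrt{2^k k!}}\,H_k\!\left(\frac{\beta v}{\sqrt2}\right)e^{-\frac{\beta^2v^2}{2}},\qquad v\in\mathbb{R}.$$ *)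

From Stdlib Require Import Reals ZArith.
From Coquelicot Require Import Coquelicot.
Open Scope R_scope.

Definition hermite (k : nat) (v : R) : R :=
  (-1) ^ k * exp (v ^ 2) * Derive_n (fun x => exp (- x ^ 2)) k v.

Definition hnorm (beta : R) (k : nat) : R :=
  sqrt beta / (Rpower (2 * PI) (1 / 4) * sqrt (2 ^ k * INR (fact k))).

Definition scaled_hermite (beta : R) (k : nat) (v : R) : R :=
  hnorm beta k * hermite k (beta * v / sqrt 2).

Definition scaled_hermite_fun (beta : R) (k : nat) (v : R) : R :=
  hnorm beta k * hermite k (beta * v / sqrt 2) * exp (- (beta ^ 2 * v ^ 2) / 2).

Definition Tnat (beta beta' : R) (l k : nat) : R :=
  RInt_gen (fun v => scaled_hermite beta' l v * scaled_hermite_fun beta k v)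
    (Rbar_locally m_infty) (Rbar_locally p_infty).

Definition T (beta beta' : R) (l k : Z) : R :=
  if orb (Z.ltb l 0) (Z.ltb k 0) then 0
  else Tnat beta beta' (Z.to_nat l) (Z.to_nat k).

(* Put a = beta / sqrt 2 and b = beta' / sqrt 2.  Up to the normalising constants of the two
   families, T_{l,k} is K_{l,k} = \int H_l(b v) H_k(a v) exp(-(a v)^2) dv.  Since
   (H_k(a v) exp(-(a v)^2))' = -a H_{k+1}(a v) exp(-(a v)^2) and H_l' = 2 l H_{l-1},
   integration by parts gives K_{l,k+1} = (2 b l / a) K_{l-1,k}; applying the recurrence
   H_{l+1}(x) = 2 x H_l(x) - 2 l H_{l-1}(x) to both factors expresses K_{l+1,k} through
   K_{l,k+1}, K_{l,k-1} and K_{l-1,k}.  These two relations, the Gauss integral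
   K_{0,0} = sqrt pi / a and K_{0,k+1} = 0 determine every K_{l,k}, and (i)-(iv) are their
   renormalised forms.  The boundary terms vanish because polynomials are dominated by the
   Gaussian, and all the integrals exist by induction on l through the same relations. *)

From Stdlib Require Import Reals ZArith Lra Lia.
From Coquelicot Require Import Coquelicot.

(* MathComp-Analysis evaluates the Gauss integral; this module transfers the result to the
   Stdlib reals, so its imports stay local. *)
Module GaussIntegral.
From HB Require Import structures.
From mathcomp Require Import all_boot all_order all_algebra.
From mathcomp Require Import all_classical all_reals all_analysis.
From mathcomp Require Import Rstruct Rstruct_topology.
Import Order.TTheory GRing.Theory Num.Theory.
Import numFieldNormedType.Exports.
Local Set Implicit Arguments.
Local Open Scope classical_set_scope.
Local Open Scope ring_scope.

Lemma RcosE (x : R) : Rtrigo_def.cos x = cos x.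
Proof.
apply/esym; rewrite /Rtrigo_def.cos; case: exist_cos => y.
rewrite /cos_in /infinite_sum => cos_ub.
rewrite -(cvg_lim _ (@cvg_cos_coeff' R x)) //; apply: (@cvg_lim R^o) => //.
rewrite -cvg_shiftS /=; apply/cvgrPdist_lt => /= e /RltP /cos_ub[N Ncos_ub].
near=> n.
have nN : (n >= N)%coq_nat by apply/ssrnat.leP; near: n; exact: nbhs_infty_ge.
move: Ncos_ub => /(_ _ nN) /[!RdistE] /RltP /=.
rewrite distrC sum_f_R0E; congr (`| _ - _ | < e).
apply: eq_bigr => k _; rewrite /cos_n /cos_coeff' factE INRE.
have -> : pow (Rsqr x) k = x ^+ k.*2.
  by rewrite RpowE -mul2n exprM; congr (_ ^+ _); rewrite expr2.
have -> : pow (-1) k = (-1) ^ k by rewrite RpowE -exprnP.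
by rewrite -[(2 * k)%coq_nat]/(2 * k)%N mul2n RdivE mulrAC.
Unshelve. all: by end_near. Qed.

Lemma R2E : IZR 2 = 2%:R :> R.
Proof. by rewrite IZRposE INRE. Qed.

Lemma PIE : PI = pi :> R.
Proof.
have [pi_half_02 cos_pi_half] := @pihalf_02_cos_pihalf R.
suff : PI / 2 = pi / 2 :> R by move/(congr1 ( *%R^~ 2)); rewrite !divfK.
apply: cos_02_uniq pi_half_02 cos_pi_half.
  have [] : (0 <= PI / 2 <= 2)%coqR by have := PI2_RGT_0; have := PI_4; lra.
  by move=> /RleP + /RleP; rewrite -R2E -RdivE => -> ->.
by have := cos_PI2; rewrite RcosE RdivE R2E.
Qed.

Lemma derivable_pt_lim_derive1 (f : R^o -> R^o) x l :
  derivable_pt_lim f x l -> derivable f x 1 /\ derive1 f x = l.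
Proof.
move=> fxl.
have cvg_quot : (fun h : R^o => h^-1 *: ((f \o shift x) (h *: (1 : R^o)) - f x))
    @ 0^' --> l.
  apply/cvgrPdist_lt => e /RltP e0.
  have [d Hd] := fxl e e0.
  exists (pos d); first by apply/RltP; exact: (cond_pos d).
  move=> t /=; rewrite sub0r normrN => /RltP td /eqP t0.
  have := Hd t t0; rewrite RabsE => /(_ td) /RltP.
  by rewrite distrC /GRing.scale /= mulr1 (addrC t x) mulrC -RdivE.
have fx : derivable f x 1 by apply/cvg_ex; exists l.
by split; rewrite // derive1E /derive (cvg_lim _ cvg_quot).
Qed.

Section GaussAntiderivative.
Variable G : R -> R.
Hypothesis G' : forall y, derivable_pt_lim G y (Rtrigo_def.exp (- (y ^ 2)))%coqR.
Hypothesis G0 : G 0 = 0.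

Let antiderivative_gaussE x : 0 < x -> G x = gauss_integral_proof.integral0_gauss x.
Proof.
move=> x0.
have Gcont y : {for y, continuous (G : R^o -> R^o)}.
  apply/continuity_pt_cvg.
  exact: derivable_continuous_pt (exist _ _ (G' y)).
have gauss_cont : {within `[0, x], continuous (@gauss_fun R)}.
  by apply: continuous_subspaceT => y; exact: continuous_gauss_fun.
have G_ftc : derivable_oo_LRcontinuous (G : R^o -> R^o) 0 x.
  split.
  - by move=> y _; exact: (derivable_pt_lim_derive1 (G' y)).1.
  - exact: cvg_at_right_filter (Gcont 0).
  - exact: cvg_at_left_filter (Gcont x).
rewrite /gauss_integral_proof.integral0_gauss /Rintegral.
rewrite (continuous_FTC2 x0 gauss_cont G_ftc) => [|y _]; first by rewrite G0 /= subr0.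
by rewrite (derivable_pt_lim_derive1 (G' y)).2 /gauss_fun RexpE RoppE RpowE.
Qed.

Lemma cvg_antiderivative_gauss (eps : R) : (0 < eps)%coqR ->
  exists M, forall x, (M < x)%coqR -> (Rabs (G x - sqrt PI / 2) < eps)%coqR.
Proof.
move=> /RltP eps0.
have := @continuous_cvg _ _ _ _ _ _ _ _ (@sqrt_continuous R _)
  (@gauss_integral_proof.cvg_integral0_gauss_sqr R) => /(_ _).
rewrite sqrtrM ?pi_ge0 // sqrtrV // (_ : 4 = 2 ^+ 2); last by rewrite expr2 -natrM.
rewrite sqrtr_sqr ger0_norm // => /cvgrPdist_lt /(_ eps eps0) [M [_ HM]].
exists (Rmax M 0) => x /RltP Mx.
have xM : M < x by apply: le_lt_trans Mx; apply/RleP; exact: Rmax_l.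
have x0 : 0 < x by apply: le_lt_trans Mx; apply/RleP; exact: Rmax_r.
have := HM x xM.
rewrite /= sqrtr_sqr (ger0_norm (gauss_integral_proof.integral0_gauss_ge0 _)).
by rewrite -antiderivative_gaussE // distrC -RabsE RsqrtE PIE RdivE R2E => /RltP.
Qed.

End GaussAntiderivative.
End GaussIntegral.

Open Scope R_scope.

(** * Improper integrals over the real line *)

Notation is_RInt_line f l :=
  (is_RInt_gen f (Rbar_locally m_infty) (Rbar_locally p_infty) l).

Lemma is_RInt_line_ext (f g : R -> R) (l : R) :
  (forall x, f x = g x) -> is_RInt_line f l -> is_RInt_line g l.
Proof.
  intros fg. apply is_RInt_gen_ext, filter_forall. intros ab x _. apply fg.
Qed.

Lemma is_RInt_line_scal (f : R -> R) (c l : R) :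
  is_RInt_line f l -> is_RInt_line (fun x => c * f x) (c * l).
Proof. apply (is_RInt_gen_scal f c l). Qed.

Lemma is_RInt_line_plus (f g : R -> R) (lf lg : R) :
  is_RInt_line f lf -> is_RInt_line g lg ->
  is_RInt_line (fun x => f x + g x) (lf + lg).
Proof. apply (is_RInt_gen_plus f g lf lg). Qed.

Lemma is_derive_continuous (f : R -> R) (x l : R) :
  is_derive f x l -> continuous f x.
Proof.
  intros fx. apply (ex_derive_continuous (K := R_AbsRing) (V := R_NormedModule)).
  exists l. exact fx.
Qed.

Lemma is_RInt_line_antiderivative (F f : R -> R) (la lb : R) :
  (forall x, is_derive F x (f x)) -> (forall x, continuous f x) ->
  filterlim F (Rbar_locally m_infty) (locally la) ->
  filterlim F (Rbar_locally p_infty) (locally lb) ->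
  is_RInt_line f (lb - la).
Proof.
  intros F' f_cont Fla Flb.
  assert (DF : forall x, Derive F x = f x) by (intros x; apply is_derive_unique, F').
  apply (is_RInt_line_ext (Derive F)); [exact DF|].
  apply is_RInt_gen_Derive; [| |exact Fla|exact Flb];
    apply filter_forall; intros ab x _.
  - exists (f x). apply F'.
  - apply (continuous_ext f); [intros y; symmetry; apply DF|apply f_cont].
Qed.

Lemma is_RInt_line_zero : is_RInt_line (fun _ => 0) 0.
Proof.
  pose proof (is_RInt_line_antiderivative (fun _ => 0) (fun _ => 0) 0 0) as zero.
  rewrite Rminus_0_r in zero. apply zero.
  - intros x. apply (is_derive_const 0).
  - intros x. apply continuous_const.
  - apply filterlim_const.
  - apply filterlim_const.
Qed.

Lemma is_RInt_line_parts (f g f' g' : R -> R) (L : R) :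
  (forall x, is_derive f x (f' x)) -> (forall x, is_derive g x (g' x)) ->
  (forall x, continuous f' x) -> (forall x, continuous g' x) ->
  filterlim (fun x => f x * g x) (Rbar_locally m_infty) (locally 0) ->
  filterlim (fun x => f x * g x) (Rbar_locally p_infty) (locally 0) ->
  is_RInt_line (fun x => f' x * g x) L ->
  is_RInt_line (fun x => f x * g' x) (- L).
Proof.
  intros df dg f'_cont g'_cont fg_minfty fg_pinfty f'g.
  assert (fgD : is_RInt_line (fun x => f' x * g x + f x * g' x) (0 - 0)).
  { apply (is_RInt_line_antiderivative (fun x => f x * g x)); auto.
    - intros x. apply (is_derive_mult f g); auto. intros; apply Rmult_comm.
    - intros x.
      apply (continuous_plus (fun x => f' x * g x) (fun x => f x * g' x));
        [apply (continuous_mult f' g)|apply (continuous_mult f g')];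
        auto; eapply is_derive_continuous; auto. }
  apply (is_RInt_line_ext (fun x => (f' x * g x + f x * g' x) - f' x * g x));
    [intros x; ring|].
  replace (- L) with ((0 - 0) - L) by ring.
  exact (is_RInt_gen_minus _ _ _ _ fgD f'g).
Qed.

Lemma filterlim_scal_pinfty (a : R) : 0 < a ->
  filterlim (fun x => a * x) (Rbar_locally p_infty) (Rbar_locally p_infty).
Proof.
  intros a0 P [M PM]. exists (M / a). intros x Mx. apply PM.
  apply (Rmult_lt_compat_l a) in Mx; auto.
  replace (a * (M / a)) with M in Mx by (field; lra). exact Mx.
Qed.

Lemma filterlim_scal_minfty (a : R) : 0 < a ->
  filterlim (fun x => a * x) (Rbar_locally m_infty) (Rbar_locally m_infty).
Proof.
  intros a0 P [M PM]. exists (M / a). intros x Mx. apply PM.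
  apply (Rmult_lt_compat_l a) in Mx; auto.
  replace (a * (M / a)) with M in Mx by (field; lra). exact Mx.
Qed.

Lemma is_lim_zero_of_bounded_mult (f : R -> R) (D : R) :
  (forall x, Rabs (x * f x) <= D) ->
  is_lim f m_infty 0 /\ is_lim f p_infty 0.
Proof.
  intros xf_bound.
  assert (small : forall x eps, 0 < eps -> D / eps < Rabs x -> Rabs (f x - 0) < eps).
  { intros x eps eps0 Dx.
    rewrite Rminus_0_r. specialize (xf_bound x). rewrite Rabs_mult in xf_bound.
    apply (Rmult_lt_compat_l eps) in Dx; auto.
    replace (eps * (D / eps)) with D in Dx by (field; lra).
    destruct (Rlt_or_le (Rabs (f x)) eps) as [|fx_large]; auto.
    pose proof (Rabs_pos x). nra. }
  assert (D0 : 0 <= D) by (eapply Rle_trans; [apply Rabs_pos|apply (xf_bound 0)]).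
  split; apply is_lim_spec; intros [eps eps0]; simpl.
  - exists (- (D / eps)). intros x Mx. apply small; auto.
    assert (0 <= D / eps) by (apply Rdiv_le_0_compat; lra).
    rewrite Rabs_left; lra.
  - exists (D / eps). intros x Mx. apply small; auto.
    assert (0 <= D / eps) by (apply Rdiv_le_0_compat; lra).
    rewrite Rabs_right; lra.
Qed.

(** * The Gauss integral on the real line *)

Definition gauss_prim (x : R) : R := RInt (fun t => exp (- t ^ 2)) 0 x.

Lemma is_derive_gauss (x : R) :
  is_derive (fun t => exp (- t ^ 2)) x (- 2 * x * exp (- x ^ 2)).
Proof. auto_derive; [auto|simpl; ring]. Qed.

Lemma is_derive_gauss_prim (x : R) : is_derive gauss_prim x (exp (- x ^ 2)).
Proof.
  assert (gauss_cont : forall t, continuous (fun t => exp (- t ^ 2)) t).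
  { intros t. eapply is_derive_continuous, is_derive_gauss. }
  apply (is_derive_RInt (fun t => exp (- t ^ 2)) gauss_prim 0); [|apply gauss_cont].
  apply filter_forall. intros y.
  apply (RInt_correct (V := R_CompleteNormedModule)),
    (ex_RInt_continuous (V := R_CompleteNormedModule)).
  intros t _. apply gauss_cont.
Qed.

Lemma gauss_prim0 : gauss_prim 0 = 0.
Proof. apply (RInt_point (V := R_CompleteNormedModule)). Qed.

Lemma lim_pinfty_gauss_antiderivative (G : R -> R) :
  (forall x, is_derive G x (exp (- x ^ 2))) -> G 0 = 0 ->
  filterlim G (Rbar_locally p_infty) (locally (sqrt PI / 2)).
Proof.
  intros G' G0. change (is_lim G p_infty (sqrt PI / 2)).
  apply is_lim_spec. intros [eps eps0].
  apply GaussIntegral.cvg_antiderivative_gauss; [|exact G0|exact eps0].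
  intros y. apply is_derive_Reals, G'.
Qed.

Lemma lim_gauss_prim :
  filterlim gauss_prim (Rbar_locally m_infty) (locally (- (sqrt PI / 2))) /\
  filterlim gauss_prim (Rbar_locally p_infty) (locally (sqrt PI / 2)).
Proof.
  split; [|apply lim_pinfty_gauss_antiderivative;
             [apply is_derive_gauss_prim|apply gauss_prim0]].
  (* x |-> - gauss_prim (- x) is another antiderivative vanishing at 0. *)
  set (H x := - gauss_prim (- x)).
  assert (H_lim : filterlim H (Rbar_locally p_infty) (locally (sqrt PI / 2))).
  { apply lim_pinfty_gauss_antiderivative.
    - intros x. unfold H.
      replace (exp (- x ^ 2)) with (- (- 1 * exp (- (- x) ^ 2)))
        by (replace ((- x) ^ 2) with (x ^ 2) by ring; ring).
      apply (is_derive_opp (fun t => gauss_prim (- t))).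
      apply (is_derive_comp gauss_prim Ropp).
      + apply is_derive_gauss_prim.
      + auto_derive; [auto|ring].
    - unfold H. rewrite Ropp_0, gauss_prim0. ring. }
  apply (filterlim_ext (fun x => - H (- x)));
    [intros x; unfold H; rewrite !Ropp_involutive; reflexivity|].
  eapply filterlim_comp; [|apply (filterlim_opp (sqrt PI / 2))].
  eapply filterlim_comp; [apply (filterlim_Rbar_opp m_infty)|exact H_lim].
Qed.

Lemma is_RInt_line_gauss (a : R) : 0 < a ->
  is_RInt_line (fun x => exp (- (a * x) ^ 2)) (sqrt PI / a).
Proof.
  intros a0. destruct lim_gauss_prim as [lim_minfty lim_pinfty].
  replace (sqrt PI / a) with (/ a * (sqrt PI / 2) - / a * (- (sqrt PI / 2))) by (field; lra).
  apply (is_RInt_line_antiderivative (fun x => / a * gauss_prim (a * x))).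
  - intros x. replace (exp (- (a * x) ^ 2)) with (/ a * (a * exp (- (a * x) ^ 2))) by (field; lra).
    apply is_derive_scal, (is_derive_comp gauss_prim (fun x => a * x)).
    + apply is_derive_gauss_prim.
    + auto_derive; [auto|ring].
  - intros x. apply (is_derive_continuous _ _ (a * (- 2 * (a * x) * exp (- (a * x) ^ 2)))).
    apply (is_derive_comp (fun t => exp (- t ^ 2)) (fun x => a * x)); [apply is_derive_gauss|].
    auto_derive; [auto|ring].
  - eapply filterlim_comp; [|apply (filterlim_scal_r (K := R_AbsRing) (V := R_NormedModule))].
    eapply filterlim_comp; [apply filterlim_scal_minfty, a0|exact lim_minfty].
  - eapply filterlim_comp; [|apply (filterlim_scal_r (K := R_AbsRing) (V := R_NormedModule))].
    eapply filterlim_comp; [apply filterlim_scal_pinfty, a0|exact lim_pinfty].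
Qed.

(** * Hermite polynomials *)

Fixpoint herm (n : nat) (x : R) : R :=
  match n with
  | O => 1
  | S O => 2 * x
  | S ((S m) as p) => 2 * x * herm p x - 2 * INR p * herm m x
  end.

Lemma herm_succ (n : nat) (x : R) :
  herm (S n) x = 2 * x * herm n x - 2 * INR n * herm (pred n) x.
Proof. destruct n as [|n]; simpl; [ring|reflexivity]. Qed.

Lemma is_derive_herm (n : nat) (x : R) :
  is_derive (herm n) x (2 * INR n * herm (pred n) x).
Proof.
  revert x.
  enough (H : forall x, is_derive (herm n) x (2 * INR n * herm (pred n) x) /\
                        is_derive (herm (S n)) x (2 * INR (S n) * herm n x))
    by (intros x; apply H).
  induction n as [|n IH]; intros x; split.
  - simpl. auto_derive; [auto|ring].
  - simpl. auto_derive; [auto|ring].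
  - apply IH.
  - destruct (IH x) as [hn' hSn'].
    apply (is_derive_ext (fun t => 2 * t * herm (S n) t - 2 * INR (S n) * herm n t));
      [reflexivity|].
    replace (2 * INR (S (S n)) * herm (S n) x)
      with (2 * herm (S n) x + 2 * x * (2 * INR (S n) * herm n x)
            - 2 * INR (S n) * (2 * INR n * herm (pred n) x))
      by (rewrite (herm_succ n x), !S_INR; ring).
    apply (is_derive_minus (fun t => 2 * t * herm (S n) t) (fun t => 2 * INR (S n) * herm n t)).
    + apply (is_derive_mult (fun t => 2 * t) (herm (S n))); [|exact hSn'|apply Rmult_comm].
      auto_derive; [auto|ring].
    + apply (is_derive_scal (herm n)), hn'.
Qed.

Lemma Derive_n_gauss (n : nat) (x : R) :
  Derive_n (fun t => exp (- t ^ 2)) n x = (-1) ^ n * herm n x * exp (- x ^ 2).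
Proof.
  revert x. induction n as [|n IH]; intros x; [simpl; ring|].
  change (Derive (Derive_n (fun t => exp (- t ^ 2)) n) x
          = (-1) ^ S n * herm (S n) x * exp (- x ^ 2)).
  rewrite (Derive_ext _ _ x IH).
  apply is_derive_unique.
  replace ((-1) ^ S n * herm (S n) x * exp (- x ^ 2))
    with ((-1) ^ n * (2 * INR n * herm (pred n) x) * exp (- x ^ 2)
          + (-1) ^ n * herm n x * (- 2 * x * exp (- x ^ 2)))
    by (rewrite herm_succ; change ((-1) ^ S n) with (-1 * (-1) ^ n); ring).
  apply (is_derive_mult (fun y => (-1) ^ n * herm n y) (fun y => exp (- y ^ 2)));
    [| |apply Rmult_comm].
  - apply (is_derive_scal (herm n)), is_derive_herm.
  - apply is_derive_gauss.
Qed.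

Lemma hermiteE (n : nat) (x : R) : hermite n x = herm n x.
Proof.
  unfold hermite. rewrite Derive_n_gauss.
  replace ((-1) ^ n * exp (x ^ 2) * ((-1) ^ n * herm n x * exp (- x ^ 2)))
    with ((-1 * -1) ^ n * (exp (x ^ 2) * exp (- x ^ 2)) * herm n x)
    by (rewrite Rpow_mult_distr; ring).
  rewrite <- exp_plus, Rplus_opp_r, exp_0.
  replace (-1 * -1) with 1 by ring. rewrite pow1. ring.
Qed.

Definition poly_bounded (f : R -> R) : Prop :=
  exists C N, forall x, Rabs (f x) <= C * (1 + x ^ 2) ^ N.

Lemma poly_bound_ge0 (f : R -> R) (C : R) (N : nat) :
  (forall x, Rabs (f x) <= C * (1 + x ^ 2) ^ N) -> 0 <= C.
Proof.
  intros fC. specialize (fC 0). pose proof (Rabs_pos (f 0)).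
  replace (1 + 0 ^ 2) with 1 in fC by ring. rewrite pow1 in fC. lra.
Qed.

Lemma Rabs_le_1_plus_sqr (x : R) : Rabs x <= 1 + x ^ 2.
Proof. rewrite <- (pow2_abs x). pose proof (pow2_ge_0 (Rabs x - 1)). nra. Qed.

Lemma poly_bounded_herm (n : nat) : poly_bounded (herm n).
Proof.
  enough (H : forall n,
    (exists C, 0 <= C /\ forall x, Rabs (herm n x) <= C * (1 + x ^ 2) ^ n) /\
    (exists C, 0 <= C /\ forall x, Rabs (herm (S n) x) <= C * (1 + x ^ 2) ^ S n))
    by (destruct (H n) as [[C [_ HC]] _]; exists C, n; exact HC).
  intros m. induction m as [|m [[C0 [C0_ge0 hm]] [C1 [C1_ge0 hSm]]]]; split.
  - exists 1. split; [lra|]. intros x. simpl. rewrite Rabs_R1. lra.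
  - exists 2. split; [lra|]. intros x. simpl. rewrite Rabs_mult, (Rabs_right 2) by lra.
    pose proof (Rabs_le_1_plus_sqr x). lra.
  - exists C1. auto.
  - exists (2 * C1 + 2 * INR (S m) * C0). split; [pose proof (pos_INR (S m)); nra|].
    intros x. rewrite herm_succ. simpl pred.
    specialize (hm x). specialize (hSm x).
    set (q := 1 + x ^ 2) in *.
    assert (q_ge1 : 1 <= q) by (unfold q; pose proof (pow2_ge_0 x); lra).
    assert (qm_ge1 : 1 <= q ^ m) by (apply pow_R1_Rle; lra).
    pose proof (Rabs_le_1_plus_sqr x) as x_le_q. fold q in x_le_q.
    pose proof (pos_INR (S m)).
    change (q ^ S (S m)) with (q * (q * q ^ m)).
    change (q ^ S m) with (q * q ^ m) in hSm.
    eapply Rle_trans; [apply Rabs_triang|].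
    rewrite Rabs_Ropp, Rabs_mult, (Rabs_mult (2 * INR (S m))), (Rabs_right (2 * INR (S m))) by lra.
    assert (Rabs (2 * x) * Rabs (herm (S m) x) <= 2 * q * (C1 * (q * q ^ m))).
    { apply Rmult_le_compat; auto using Rabs_pos.
      rewrite Rabs_mult, (Rabs_right 2) by lra. lra. }
    assert (C0 * q ^ m <= C0 * (q * (q * q ^ m)))
      by (apply Rmult_le_compat_l; [lra|]; rewrite <- Rmult_assoc;
          rewrite <- (Rmult_1_l (q ^ m)) at 1; apply Rmult_le_compat_r; nra).
    nra.
Qed.

Lemma poly_bounded_scal (f : R -> R) (a : R) :
  poly_bounded f -> poly_bounded (fun x => f (a * x)).
Proof.
  intros [C [N fC]]. pose proof (poly_bound_ge0 f C N fC).
  exists (C * (1 + a ^ 2) ^ N), N. intros x.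
  eapply Rle_trans; [apply fC|]. rewrite Rmult_assoc, <- Rpow_mult_distr.
  apply Rmult_le_compat_l; [lra|]. apply pow_incr.
  pose proof (pow2_ge_0 a). pose proof (pow2_ge_0 x). split; nra.
Qed.

Lemma poly_bounded_mult (f g : R -> R) :
  poly_bounded f -> poly_bounded g -> poly_bounded (fun x => f x * g x).
Proof.
  intros [C [N fC]] [D [M gD]]. exists (C * D), (N + M)%nat. intros x.
  rewrite Rabs_mult, pow_add.
  replace (C * D * ((1 + x ^ 2) ^ N * (1 + x ^ 2) ^ M))
    with (C * (1 + x ^ 2) ^ N * (D * (1 + x ^ 2) ^ M)) by ring.
  apply Rmult_le_compat; auto using Rabs_pos.
Qed.

Lemma pow_le_exp (t : R) (n : nat) : 0 <= t -> (1 + t) ^ n <= exp (INR n * t).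
Proof.
  intros t0.
  replace (exp (INR n * t)) with (exp t ^ n)
    by (rewrite <- Rpower_pow by apply exp_pos; unfold Rpower; rewrite ln_exp; reflexivity).
  apply pow_incr. split; [lra|apply exp_ineq1_le].
Qed.

Lemma poly_gauss_bounded (c : R) (N : nat) : 0 < c ->
  exists D, forall x, (1 + x ^ 2) ^ N * exp (- (c * x ^ 2)) <= D.
Proof.
  (* (m (1 + y))^N <= (1 + m y)^N <= exp (N m y) <= exp (c y) for m = min 1 (c / (N + 1)). *)
  intros c0.
  assert (SN0 : 0 < INR (S N)) by apply lt_0_INR, Nat.lt_0_succ.
  set (m := Rmin 1 (c / INR (S N))).
  assert (m0 : 0 < m) by (apply Rmin_glb_lt; [lra|apply Rdiv_lt_0_compat; lra]).
  assert (m1 : m <= 1) by apply Rmin_l.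
  assert (Nm_le_c : INR N * m <= c).
  { apply (Rle_trans _ (INR (S N) * m)).
    - apply Rmult_le_compat_r; [lra|apply le_INR; lia].
    - apply (Rmult_le_reg_r (/ INR (S N))); [apply Rinv_0_lt_compat; lra|].
      replace (INR (S N) * m * / INR (S N)) with m by (field; lra). apply Rmin_r. }
  assert (mN0 : 0 < m ^ N) by (apply pow_lt; lra).
  exists (/ m ^ N). intros x. pose proof (pow2_ge_0 x).
  assert (key : (m * (1 + x ^ 2)) ^ N <= exp (c * x ^ 2)).
  { apply (Rle_trans _ ((1 + m * x ^ 2) ^ N)); [apply pow_incr; split; nra|].
    apply (Rle_trans _ (exp (INR N * (m * x ^ 2)))); [apply pow_le_exp; nra|].
    destruct (Req_dec (INR N * (m * x ^ 2)) (c * x ^ 2)) as [->|ne]; [lra|].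
    left. apply exp_increasing. pose proof (pos_INR N). nra. }
  rewrite Rpow_mult_distr in key.
  pose proof (exp_pos (c * x ^ 2)).
  rewrite exp_Ropp.
  apply (Rmult_le_reg_l (m ^ N * exp (c * x ^ 2))); [nra|].
  replace (m ^ N * exp (c * x ^ 2) * ((1 + x ^ 2) ^ N * / exp (c * x ^ 2)))
    with (m ^ N * (1 + x ^ 2) ^ N) by (field; lra).
  replace (m ^ N * exp (c * x ^ 2) * / m ^ N) with (exp (c * x ^ 2)) by (field; lra).
  exact key.
Qed.

Lemma is_lim_poly_bounded_mult_gauss (f : R -> R) (c : R) :
  poly_bounded f -> 0 < c ->
  is_lim (fun x => f x * exp (- (c * x ^ 2))) m_infty 0 /\
  is_lim (fun x => f x * exp (- (c * x ^ 2))) p_infty 0.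
Proof.
  intros [C [N fC]] c0. pose proof (poly_bound_ge0 f C N fC).
  destruct (poly_gauss_bounded c (S N) c0) as [D HD].
  apply (is_lim_zero_of_bounded_mult _ (C * D)). intros x.
  rewrite !Rabs_mult, (Rabs_right (exp _)) by (left; apply exp_pos).
  set (e := exp (- (c * x ^ 2))). assert (e0 : 0 < e) by apply exp_pos.
  apply (Rle_trans _ ((1 + x ^ 2) * (C * (1 + x ^ 2) ^ N * e))).
  - apply Rmult_le_compat; [apply Rabs_pos|apply Rmult_le_pos; [apply Rabs_pos|lra]| |].
    + apply Rabs_le_1_plus_sqr.
    + apply Rmult_le_compat_r; [lra|apply fC].
  - replace ((1 + x ^ 2) * (C * (1 + x ^ 2) ^ N * e))
      with (C * ((1 + x ^ 2) ^ S N * e)) by (simpl; ring).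
    apply Rmult_le_compat_l; [assumption|apply HD].
Qed.

(** * Integrals of products of Hermite functions *)

Section HermiteIntegrals.
Variables a b : R.
Hypothesis a0 : 0 < a.

Definition herm_pol (l : nat) (v : R) : R := herm l (b * v).
Definition herm_fun (k : nat) (v : R) : R := herm k (a * v) * exp (- (a * v) ^ 2).
Definition herm_prod (l k : nat) (v : R) : R := herm_pol l v * herm_fun k v.
Definition herm_int (l k : nat) : R :=
  RInt_gen (herm_prod l k) (Rbar_locally m_infty) (Rbar_locally p_infty).

Lemma is_derive_herm_pol (l : nat) (v : R) :
  is_derive (herm_pol l) v (2 * b * INR l * herm_pol (pred l) v).
Proof.
  unfold herm_pol.
  replace (2 * b * INR l * herm (pred l) (b * v))
    with (b * (2 * INR l * herm (pred l) (b * v))) by ring.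
  apply (is_derive_comp (herm l) (fun v => b * v)); [apply is_derive_herm|].
  auto_derive; [auto|ring].
Qed.

Lemma is_derive_herm_fun (k : nat) (v : R) :
  is_derive (herm_fun k) v (- a * herm_fun (S k) v).
Proof.
  unfold herm_fun. rewrite herm_succ.
  replace (- a * ((2 * (a * v) * herm k (a * v) - 2 * INR k * herm (pred k) (a * v))
                  * exp (- (a * v) ^ 2)))
    with (a * (2 * INR k * herm (pred k) (a * v)) * exp (- (a * v) ^ 2)
          + herm k (a * v) * (a * (- 2 * (a * v) * exp (- (a * v) ^ 2)))) by ring.
  apply (is_derive_mult (fun v => herm k (a * v)) (fun v => exp (- (a * v) ^ 2)));
    [| |apply Rmult_comm].
  - apply (is_derive_comp (herm k) (fun v => a * v)); [apply is_derive_herm|].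
    auto_derive; [auto|ring].
  - apply (is_derive_comp (fun t => exp (- t ^ 2)) (fun v => a * v)); [apply is_derive_gauss|].
    auto_derive; [auto|ring].
Qed.

Lemma continuous_herm_pol (l : nat) (v : R) : continuous (herm_pol l) v.
Proof. eapply is_derive_continuous, is_derive_herm_pol. Qed.

Lemma continuous_herm_fun (k : nat) (v : R) : continuous (herm_fun k) v.
Proof. eapply is_derive_continuous, is_derive_herm_fun. Qed.

Lemma lim_herm_prod (l k : nat) :
  filterlim (herm_prod l k) (Rbar_locally m_infty) (locally 0) /\
  filterlim (herm_prod l k) (Rbar_locally p_infty) (locally 0).
Proof.
  assert (E : forall v, (herm l (b * v) * herm k (a * v)) * exp (- (a ^ 2 * v ^ 2))
                        = herm_prod l k v)
    by (intros v; unfold herm_prod, herm_pol, herm_fun; rewrite Rpow_mult_distr; ring).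
  destruct (is_lim_poly_bounded_mult_gauss (fun v => herm l (b * v) * herm k (a * v)) (a ^ 2))
    as [lim_m lim_p].
  - apply poly_bounded_mult; apply poly_bounded_scal, poly_bounded_herm.
  - apply pow_lt, a0.
  - split; [apply (filterlim_ext _ _ E lim_m)|apply (filterlim_ext _ _ E lim_p)].
Qed.

Lemma herm_prod_succ (m k : nat) (v : R) :
  herm_prod (S m) k v = b / a * herm_prod m (S k) v
    + 2 * INR k * (b / a) * herm_prod m (pred k) v - 2 * INR m * herm_prod (pred m) k v.
Proof.
  unfold herm_prod, herm_pol, herm_fun. rewrite (herm_succ m), (herm_succ k). field. lra.
Qed.

Lemma is_RInt_line_herm_prod_succ (m k : nat) (L1 L2 L3 : R) :
  is_RInt_line (herm_prod m (S k)) L1 -> is_RInt_line (herm_prod m (pred k)) L2 ->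
  is_RInt_line (herm_prod (pred m) k) L3 ->
  is_RInt_line (herm_prod (S m) k) (b / a * L1 + 2 * INR k * (b / a) * L2 - 2 * INR m * L3).
Proof.
  intros h1 h2 h3.
  replace (b / a * L1 + 2 * INR k * (b / a) * L2 - 2 * INR m * L3)
    with (b / a * L1 + 2 * INR k * (b / a) * L2 + - (2 * INR m) * L3) by ring.
  apply (is_RInt_line_ext (fun v => b / a * herm_prod m (S k) v
           + 2 * INR k * (b / a) * herm_prod m (pred k) v
           + - (2 * INR m) * herm_prod (pred m) k v)).
  - intros v. rewrite herm_prod_succ. ring.
  - apply is_RInt_line_plus; [apply is_RInt_line_plus|]; apply is_RInt_line_scal; assumption.
Qed.

Lemma is_RInt_line_herm_prod_S (l k : nat) (L : R) :
  is_RInt_line (fun v => 2 * b * INR l * herm_prod (pred l) k v) L ->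
  is_RInt_line (herm_prod l (S k)) (L / a).
Proof.
  intros hL.
  assert (parts : is_RInt_line (fun v => herm_pol l v * (- a * herm_fun (S k) v)) (- L)).
  { apply (is_RInt_line_parts (herm_pol l) (herm_fun k)
             (fun v => 2 * b * INR l * herm_pol (pred l) v) (fun v => - a * herm_fun (S k) v)).
    - apply is_derive_herm_pol.
    - apply is_derive_herm_fun.
    - intros v. apply (continuous_scal_r (K := R_AbsRing) (V := R_NormedModule)),
        continuous_herm_pol.
    - intros v. apply (continuous_scal_r (K := R_AbsRing) (V := R_NormedModule)),
        continuous_herm_fun.
    - apply lim_herm_prod.
    - apply lim_herm_prod.
    - revert hL. apply is_RInt_line_ext. intros v. unfold herm_prod. ring. }
  replace (L / a) with (- / a * - L) by (field; lra).
  apply (is_RInt_line_ext (fun v => - / a * (herm_pol l v * (- a * herm_fun (S k) v)))).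
  - intros v. unfold herm_prod. field. lra.
  - apply is_RInt_line_scal, parts.
Qed.

Lemma is_RInt_line_herm_prod_00 : is_RInt_line (herm_prod 0 0) (sqrt PI / a).
Proof.
  apply (is_RInt_line_ext (fun v => exp (- (a * v) ^ 2))); [|apply is_RInt_line_gauss, a0].
  intros v. unfold herm_prod, herm_pol, herm_fun. simpl. ring.
Qed.

Lemma is_RInt_line_herm_prod_0S (k : nat) : is_RInt_line (herm_prod 0 (S k)) 0.
Proof.
  replace 0 with (0 / a) by (field; lra).
  apply is_RInt_line_herm_prod_S.
  apply (is_RInt_line_ext (fun _ => 0)); [intros v; simpl; ring|apply is_RInt_line_zero].
Qed.

Lemma ex_RInt_line_herm_prod (l k : nat) : exists L, is_RInt_line (herm_prod l k) L.
Proof.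
  revert k. induction l as [l IH] using (well_founded_ind Nat.lt_wf_0). intros k.
  destruct l as [|m].
  - destruct k as [|k]; [exists (sqrt PI / a); apply is_RInt_line_herm_prod_00|].
    exists 0. apply is_RInt_line_herm_prod_0S.
  - destruct (IH m (Nat.lt_succ_diag_r m) (S k)) as [L1 h1].
    destruct (IH m (Nat.lt_succ_diag_r m) (pred k)) as [L2 h2].
    destruct (IH (pred m) ltac:(lia) k) as [L3 h3].
    eexists. apply is_RInt_line_herm_prod_succ; eassumption.
Qed.

Lemma herm_int_unique (l k : nat) (L : R) :
  is_RInt_line (herm_prod l k) L -> herm_int l k = L.
Proof. apply (is_RInt_gen_unique (V := R_CompleteNormedModule)). Qed.

Lemma is_RInt_line_herm_int (l k : nat) : is_RInt_line (herm_prod l k) (herm_int l k).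
Proof.
  destruct (ex_RInt_line_herm_prod l k) as [L hL].
  rewrite (herm_int_unique _ _ _ hL). exact hL.
Qed.

Lemma herm_int_00 : herm_int 0 0 = sqrt PI / a.
Proof. apply herm_int_unique, is_RInt_line_herm_prod_00. Qed.

Lemma herm_int_0S (k : nat) : herm_int 0 (S k) = 0.
Proof. apply herm_int_unique, is_RInt_line_herm_prod_0S. Qed.

Lemma herm_int_SS (l k : nat) :
  herm_int (S l) (S k) = 2 * b * INR (S l) / a * herm_int l k.
Proof.
  apply herm_int_unique.
  replace (2 * b * INR (S l) / a * herm_int l k)
    with (2 * b * INR (S l) * herm_int l k / a) by (field; lra).
  apply is_RInt_line_herm_prod_S, is_RInt_line_scal, is_RInt_line_herm_int.
Qed.

Lemma herm_int_succ (m k : nat) :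
  herm_int (S m) k = b / a * herm_int m (S k)
    + 2 * INR k * (b / a) * herm_int m (pred k) - 2 * INR m * herm_int (pred m) k.
Proof. apply herm_int_unique, is_RInt_line_herm_prod_succ; apply is_RInt_line_herm_int. Qed.

Lemma herm_int_lt (l k : nat) : (l < k)%nat -> herm_int l k = 0.
Proof.
  revert k. induction l as [|l IH]; intros [|k] lk; try lia.
  - apply herm_int_0S.
  - rewrite herm_int_SS, IH by lia. ring.
Qed.

Lemma herm_int_odd (l k : nat) : Nat.Odd (l + k) -> herm_int l k = 0.
Proof.
  revert k. induction l as [l IH] using (well_founded_ind Nat.lt_wf_0). intros k [j lk].
  destruct l as [|m].
  - destruct k as [|k]; [lia|apply herm_int_0S].
  - assert (second : INR k * herm_int m (pred k) = 0).
    { destruct k as [|k]; [simpl; ring|].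
      rewrite (IH m) by (lia || (exists (j - 1)%nat; lia)). ring. }
    assert (third : INR m * herm_int (pred m) k = 0).
    { destruct m as [|m]; [simpl; ring|].
      rewrite (IH m) by (lia || (exists (j - 1)%nat; lia)). ring. }
    rewrite herm_int_succ, (IH m) by (lia || (exists j; lia)).
    transitivity (2 * (b / a) * (INR k * herm_int m (pred k))
                  - 2 * (INR m * herm_int (pred m) k)); [ring|].
    rewrite second, third. ring.
Qed.

Hypothesis b0 : 0 < b.

Lemma herm_int_two_term (m k : nat) :
  (INR (S m) - INR k) * herm_int (S m) k = INR (S m) * (b / a - a / b) * herm_int m (S k).
Proof.
  assert (lower : 2 * INR m * herm_int (pred m) k = a / b * herm_int m (S k)).
  { destruct m as [|m]; [rewrite herm_int_0S; simpl; ring|].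
    rewrite herm_int_SS. simpl pred. field. lra. }
  destruct k as [|k].
  - rewrite herm_int_succ, lower. simpl INR. field. lra.
  - replace ((INR (S m) - INR (S k)) * herm_int (S m) (S k))
      with (INR (S m) * herm_int (S m) (S k) - INR (S k) * herm_int (S m) (S k)) by ring.
    rewrite herm_int_succ at 1. rewrite lower, herm_int_SS. simpl pred. field. lra.
Qed.

End HermiteIntegrals.

(** * Normalisation *)

Lemma sqrt_double_INR_S (n : nat) :
  0 < sqrt (2 * INR (S n)) /\ sqrt (2 * INR (S n)) * sqrt (2 * INR (S n)) = 2 * INR (S n).
Proof.
  assert (0 < INR (S n)) by apply lt_0_INR, Nat.lt_0_succ.
  split; [apply sqrt_lt_R0|apply sqrt_sqrt]; lra.
Qed.

Lemma sqrt_div_double (x y : R) : 0 <= x -> 0 < y ->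
  sqrt (x / y) = sqrt (2 * x) / sqrt (2 * y).
Proof.
  intros x0 y0. rewrite <- sqrt_div_alt by lra. f_equal. field. lra.
Qed.

Lemma sqrt_mult_double (x y : R) : 0 <= x -> 0 <= y ->
  sqrt (x * y) = sqrt (2 * x) * sqrt (2 * y) / 2.
Proof.
  intros x0 y0. rewrite <- sqrt_mult by lra.
  replace (2 * x * (2 * y)) with (2 * 2 * (x * y)) by ring.
  rewrite (sqrt_mult (2 * 2)), sqrt_square by nra. field.
Qed.

Lemma hnorm_succ (be : R) (k : nat) :
  hnorm be (S k) = hnorm be k / sqrt (2 * INR (S k)).
Proof.
  unfold hnorm.
  assert (fact_pos : 0 < 2 ^ k * INR (fact k))
    by (apply Rmult_lt_0_compat; [apply pow_lt; lra|apply lt_0_INR, lt_O_fact]).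
  destruct (sqrt_double_INR_S k) as [sk0 _].
  replace (2 ^ S k * INR (fact (S k))) with ((2 ^ k * INR (fact k)) * (2 * INR (S k)))
    by (rewrite fact_simpl, mult_INR; simpl; ring).
  pose proof (pos_INR (S k)).
  rewrite sqrt_mult by lra.
  assert (0 < sqrt (2 ^ k * INR (fact k))) by (apply sqrt_lt_R0; lra).
  assert (0 < Rpower (2 * PI) (1 / 4)) by apply exp_pos.
  field. repeat split; lra.
Qed.

Lemma hnorm_pred (be : R) (n : nat) :
  2 * INR n * hnorm be n = sqrt (2 * INR n) * hnorm be (pred n).
Proof.
  destruct n as [|n]; [simpl INR; rewrite Rmult_0_r, sqrt_0; ring|].
  rewrite hnorm_succ. simpl pred.
  destruct (sqrt_double_INR_S n) as [t0 t2]. set (t := sqrt (2 * INR (S n))) in *.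
  rewrite <- t2. field. lra.
Qed.

Section NormalizedIntegrals.
Variables beta beta' : R.
Hypothesis beta0 : 0 < beta.
Hypothesis beta'0 : 0 < beta'.

Let sqrt2_pos : 0 < sqrt 2.
Proof. apply sqrt_lt_R0. lra. Qed.

Let a := beta / sqrt 2.
Let b := beta' / sqrt 2.

Let a0 : 0 < a.
Proof. apply Rdiv_lt_0_compat; assumption. Qed.

Let b0 : 0 < b.
Proof. apply Rdiv_lt_0_compat; assumption. Qed.

Let ratio : b / a = beta' / beta.
Proof. unfold a, b. field. lra. Qed.

Let ratio' : a / b = beta / beta'.
Proof. unfold a, b. field. lra. Qed.

Lemma Tnat_herm_int (l k : nat) :
  Tnat beta beta' l k = hnorm beta' l * hnorm beta k * herm_int a b l k.
Proof.
  apply (is_RInt_gen_unique (V := R_CompleteNormedModule)).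
  apply (is_RInt_line_ext (fun v => hnorm beta' l * hnorm beta k * herm_prod a b l k v));
    [|apply is_RInt_line_scal, is_RInt_line_herm_int, a0].
  intros v. unfold scaled_hermite, scaled_hermite_fun, herm_prod, herm_pol, herm_fun.
  rewrite !hermiteE.
  replace (beta' * v / sqrt 2) with (b * v) by (unfold b; field; lra).
  replace (beta * v / sqrt 2) with (a * v) by (unfold a; field; lra).
  replace (- (beta ^ 2 * v ^ 2) / 2) with (- (a * v) ^ 2); [ring|].
  unfold a. replace ((beta / sqrt 2 * v) ^ 2) with (beta ^ 2 * v ^ 2 / (sqrt 2 * sqrt 2))
    by (field; lra).
  rewrite sqrt_sqrt by lra. field.
Qed.

Lemma Tnat_lt (l k : nat) : (l < k)%nat -> Tnat beta beta' l k = 0.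
Proof. intros lk. rewrite Tnat_herm_int, herm_int_lt by assumption. ring. Qed.

Lemma Tnat_odd (l k : nat) : Nat.Odd (l + k) -> Tnat beta beta' l k = 0.
Proof. intros lk. rewrite Tnat_herm_int, herm_int_odd by assumption. ring. Qed.

Lemma Tnat_shift (l k : nat) :
  Tnat beta beta' l k =
    beta / beta' * sqrt (INR (S k) / INR (S l)) * Tnat beta beta' (S l) (S k).
Proof.
  rewrite !Tnat_herm_int, herm_int_SS, !hnorm_succ by exact a0.
  rewrite sqrt_div_double by (apply pos_INR || apply lt_0_INR; lia).
  replace (2 * b * INR (S l) / a) with (b / a * (2 * INR (S l))) by (field; lra).
  rewrite ratio.
  destruct (sqrt_double_INR_S l) as [tl0 tl2]. destruct (sqrt_double_INR_S k) as [tk0 _].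
  set (tl := sqrt (2 * INR (S l))) in *. set (tk := sqrt (2 * INR (S k))) in *.
  rewrite <- tl2. field. repeat split; lra.
Qed.

Lemma Tnat_diag (l : nat) : Tnat beta beta' l l = Rpower (beta' / beta) (INR l + 1 / 2).
Proof.
  assert (r0 : 0 < beta' / beta) by (apply Rdiv_lt_0_compat; assumption).
  induction l as [|l IH].
  - rewrite Tnat_herm_int, herm_int_00 by exact a0.
    unfold hnorm. simpl. rewrite Rmult_1_r, sqrt_1, !Rmult_1_r.
    replace (0 + 1 / 2) with (/ 2) by field. rewrite Rpower_sqrt by exact r0.
    set (c := Rpower (2 * PI) (1 / 4)).
    assert (c2 : c * c = sqrt 2 * sqrt PI).
    { unfold c. rewrite <- Rpower_plus. replace (1 / 4 + 1 / 4) with (/ 2) by field.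
      rewrite Rpower_sqrt, sqrt_mult; pose proof PI_RGT_0; lra. }
    assert (0 < c) by apply exp_pos.
    assert (0 < sqrt PI) by apply sqrt_lt_R0, PI_RGT_0.
    assert (0 < sqrt beta) by (apply sqrt_lt_R0; lra).
    rewrite sqrt_div_alt by lra. unfold a.
    replace (sqrt beta' / c * (sqrt beta / c) * (sqrt PI / (beta / sqrt 2)))
      with (sqrt beta' * sqrt beta * sqrt PI * sqrt 2 / ((c * c) * beta))
      by (field; repeat split; lra).
    assert (sb2 : sqrt beta * sqrt beta = beta) by (apply sqrt_sqrt; lra).
    set (sb := sqrt beta) in *.
    rewrite c2, <- sb2. field. repeat split; lra.
  - replace (INR (S l) + 1 / 2) with (1 + (INR l + 1 / 2)) by (rewrite S_INR; ring).
    rewrite Rpower_plus, Rpower_1, <- IH by exact r0.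
    rewrite (Tnat_shift l l), Rdiv_diag, sqrt_1 by (apply not_0_INR; lia).
    field. lra.
Qed.

Lemma Tnat_three_term (m k : nat) :
  Tnat beta beta' (S m) k =
    beta' / beta * sqrt (INR (S k) / INR (S m)) * Tnat beta beta' m (S k)
  + beta' / beta * sqrt (INR k / INR (S m)) * Tnat beta beta' m (pred k)
  - sqrt (INR m / INR (S m)) * Tnat beta beta' (pred m) k.
Proof.
  rewrite !Tnat_herm_int, (herm_int_succ a b a0), ratio, (hnorm_succ beta' m).
  rewrite !(sqrt_div_double _ (INR (S m))) by (apply pos_INR || apply lt_0_INR; lia).
  destruct (sqrt_double_INR_S m) as [tm0 _]. set (tm := sqrt (2 * INR (S m))) in *.
  set (r := beta' / beta).
  set (X1 := herm_int a b m (S k)). set (X2 := herm_int a b m (pred k)).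
  set (X3 := herm_int a b (pred m) k).
  assert (t1 : hnorm beta' m / tm * hnorm beta k * (r * X1)
               = r * (sqrt (2 * INR (S k)) / tm) * (hnorm beta' m * hnorm beta (S k) * X1)).
  { rewrite hnorm_succ. destruct (sqrt_double_INR_S k). field. lra. }
  assert (t2 : hnorm beta' m / tm * hnorm beta k * (2 * INR k * r * X2)
               = r * (sqrt (2 * INR k) / tm) * (hnorm beta' m * hnorm beta (pred k) * X2)).
  { transitivity (r / tm * hnorm beta' m * X2 * (2 * INR k * hnorm beta k)); [field; lra|].
    rewrite hnorm_pred. field. lra. }
  assert (t3 : hnorm beta' m / tm * hnorm beta k * (2 * INR m * X3)
               = sqrt (2 * INR m) / tm * (hnorm beta' (pred m) * hnorm beta k * X3)).
  { transitivity (hnorm beta k * X3 / tm * (2 * INR m * hnorm beta' m)); [field; lra|].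
    rewrite hnorm_pred. field. lra. }
  rewrite <- t1, <- t2, <- t3. ring.
Qed.

Lemma Tnat_two_term (m k : nat) : INR (S m) <> INR k ->
  Tnat beta beta' (S m) k =
    sqrt (INR (S m) * INR (S k)) / (INR (S m) - INR k) * (beta' / beta - beta / beta')
    * Tnat beta beta' m (S k).
Proof.
  intros mk.
  assert (K : herm_int a b (S m) k
              = INR (S m) * (beta' / beta - beta / beta') * herm_int a b m (S k)
                / (INR (S m) - INR k)).
  { rewrite <- ratio, <- ratio', <- herm_int_two_term by assumption. field. lra. }
  rewrite !Tnat_herm_int, K, (hnorm_succ beta' m), (hnorm_succ beta k).
  rewrite (sqrt_mult_double (INR (S m)) (INR (S k))) by apply pos_INR.
  destruct (sqrt_double_INR_S m) as [tm0 tm2]. destruct (sqrt_double_INR_S k) as [tk0 _].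
  set (tm := sqrt (2 * INR (S m))) in *. set (tk := sqrt (2 * INR (S k))) in *.
  replace (INR (S m)) with (tm * tm / 2) by lra.
  field. repeat split; lra.
Qed.

End NormalizedIntegrals.

Lemma T_of_nat (beta beta' : R) (l k : nat) :
  T beta beta' (Z.of_nat l) (Z.of_nat k) = Tnat beta beta' l k.
Proof.
  unfold T. rewrite !Nat2Z.id.
  replace (Z.ltb (Z.of_nat l) 0) with false by (symmetry; apply Z.ltb_ge; lia).
  replace (Z.ltb (Z.of_nat k) 0) with false by (symmetry; apply Z.ltb_ge; lia).
  reflexivity.
Qed.

Section IntegerIndices.
Variables beta beta' : R.
Hypothesis beta0 : 0 < beta.
Hypothesis beta'0 : 0 < beta'.

Lemma T_vanish (l k : Z) : (0 <= l)%Z -> (0 <= k)%Z ->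
  ((l < k)%Z \/ Z.odd (l + k) = true) -> T beta beta' l k = 0.
Proof.
  intros l0 k0 lk.
  destruct (Z_of_nat_complete l l0) as [n ->]. destruct (Z_of_nat_complete k k0) as [m ->].
  rewrite T_of_nat.
  destruct lk as [lk|[j odd]%Z.odd_spec].
  - apply Tnat_lt; [assumption..|lia].
  - apply Tnat_odd; [assumption..|exists (Z.to_nat j); lia].
Qed.

Lemma T_shift (l k : Z) : (0 <= l)%Z -> (0 <= k)%Z ->
  T beta beta' l k =
    beta / beta' * sqrt ((IZR k + 1) / (IZR l + 1)) * T beta beta' (l + 1) (k + 1).
Proof.
  intros l0 k0.
  destruct (Z_of_nat_complete l l0) as [n ->]. destruct (Z_of_nat_complete k k0) as [m ->].
  replace (Z.of_nat n + 1)%Z with (Z.of_nat (S n)) by lia.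
  replace (Z.of_nat m + 1)%Z with (Z.of_nat (S m)) by lia.
  rewrite !T_of_nat, <- !INR_IZR_INZ, <- !S_INR.
  apply Tnat_shift; assumption.
Qed.

Lemma T_diag (l : Z) : (0 <= l)%Z ->
  T beta beta' l l = Rpower (beta' / beta) (IZR l + 1 / 2).
Proof.
  intros l0. destruct (Z_of_nat_complete l l0) as [n ->].
  rewrite T_of_nat, <- INR_IZR_INZ. apply Tnat_diag; assumption.
Qed.

Lemma T_three_term (l k : Z) : (1 <= l)%Z -> (0 <= k)%Z ->
  T beta beta' l k =
    beta' / beta * sqrt ((IZR k + 1) / IZR l) * T beta beta' (l - 1) (k + 1)
  + beta' / beta * sqrt (IZR k / IZR l) * T beta beta' (l - 1) (k - 1)
  - sqrt ((IZR l - 1) / IZR l) * T beta beta' (l - 2) k.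
Proof.
  intros l1 k0.
  destruct (Z_of_nat_complete (l - 1) ltac:(lia)) as [n ln].
  replace l with (Z.of_nat (S n)) by lia. clear l1 ln.
  destruct (Z_of_nat_complete k k0) as [m ->].
  replace (Z.of_nat (S n) - 1)%Z with (Z.of_nat n) by lia.
  replace (Z.of_nat m + 1)%Z with (Z.of_nat (S m)) by lia.
  rewrite !T_of_nat, <- !INR_IZR_INZ, <- S_INR, Tnat_three_term by assumption.
  replace (INR (S n) - 1) with (INR n) by (rewrite S_INR; ring).
  (* A negative index can only occur with the vanishing coefficient sqrt 0. *)
  assert (second : sqrt (INR m / INR (S n)) * Tnat beta beta' n (pred m)
                   = sqrt (INR m / INR (S n)) * T beta beta' (Z.of_nat n) (Z.of_nat m - 1)).
  { destruct m as [|m]; [simpl INR; rewrite Rdiv_0_l, sqrt_0; ring|].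
    replace (Z.of_nat (S m) - 1)%Z with (Z.of_nat m) by lia. rewrite T_of_nat. reflexivity. }
  assert (third : sqrt (INR n / INR (S n)) * Tnat beta beta' (pred n) m
                  = sqrt (INR n / INR (S n)) * T beta beta' (Z.of_nat (S n) - 2) (Z.of_nat m)).
  { destruct n as [|n]; [simpl INR; rewrite Rdiv_0_l, sqrt_0; ring|].
    replace (Z.of_nat (S (S n)) - 2)%Z with (Z.of_nat n) by lia. rewrite T_of_nat. reflexivity. }
  rewrite !(Rmult_assoc (beta' / beta)), second, third. reflexivity.
Qed.

Lemma T_two_term (l k : Z) : (1 <= l)%Z -> (0 <= k)%Z -> l <> k ->
  T beta beta' l k =
    sqrt (IZR l * (IZR k + 1)) / (IZR l - IZR k) * (beta' / beta - beta / beta')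
    * T beta beta' (l - 1) (k + 1).
Proof.
  intros l1 k0 lk.
  destruct (Z_of_nat_complete (l - 1) ltac:(lia)) as [n ln].
  replace l with (Z.of_nat (S n)) in * by lia. clear l1 ln.
  destruct (Z_of_nat_complete k k0) as [m ->].
  replace (Z.of_nat (S n) - 1)%Z with (Z.of_nat n) by lia.
  replace (Z.of_nat m + 1)%Z with (Z.of_nat (S m)) by lia.
  rewrite !T_of_nat, <- !INR_IZR_INZ, <- (S_INR m).
  apply Tnat_two_term; [assumption..|].
  intros nm. apply lk, f_equal, INR_eq, nm.
Qed.

End IntegerIndices.

Theorem proposition3p1 (beta beta' : R) (hb : 0 < beta) (hb' : 0 < beta') :
  (* (i) *)
  (forall l k : Z, (0 <= l)%Z -> (0 <= k)%Z ->
     ((l < k)%Z \/ Z.odd (l + k) = true) -> T beta beta' l k = 0) /\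
  (* (ii) *)
  (forall l k : Z, (0 <= l)%Z -> (0 <= k)%Z ->
     T beta beta' l k =
       beta / beta' * sqrt ((IZR k + 1) / (IZR l + 1)) * T beta beta' (l + 1) (k + 1)) /\
  (forall l : Z, (0 <= l)%Z ->
     T beta beta' l l = Rpower (beta' / beta) (IZR l + 1 / 2)) /\
  (* (iii) *)
  (forall l k : Z, (1 <= l)%Z -> (0 <= k)%Z ->
     T beta beta' l k =
       beta' / beta * sqrt ((IZR k + 1) / IZR l) * T beta beta' (l - 1) (k + 1)
     + beta' / beta * sqrt (IZR k / IZR l) * T beta beta' (l - 1) (k - 1)
     - sqrt ((IZR l - 1) / IZR l) * T beta beta' (l - 2) k) /\
  (* (iv) *)
  (forall l k : Z, (1 <= l)%Z -> (0 <= k)%Z -> l <> k ->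
     T beta beta' l k =
       sqrt (IZR l * (IZR k + 1)) / (IZR l - IZR k) * (beta' / beta - beta / beta')
       * T beta beta' (l - 1) (k + 1)).
Proof.
  split; [|split; [|split; [|split]]]; intros.
  - apply T_vanish; assumption.
  - apply T_shift; assumption.
  - apply T_diag; assumption.
  - apply T_three_term; assumption.
  - apply T_two_term; assumption.
Qed.
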